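(* Let $k\ge 2$ be an integer that is not a perfect square, and let $R_k\subseteq\{0,1,\dots,k-1\}$ be the set of remainders modulo $k$ of the indices $\xi$ of solutions of $T_\xi=kT_t$ (as defined in the context), with $\upsilon=|R_k|$. Then: (i) $0\in R_k$ and $k-1\in R_k$; (ii) for every $\mu\in R_k$ one also has $k-1-\mu\in R_k$, so that the remainders come in pairs $\{\mu,\,k-1-\mu\}$ whose sum is $k-1$; (iii) $\upsilon$ is even; (iv) $\sum_{\mu\in R_k}\mu=(k-1)\,\upsilon/2$.
   Context: For an integer $m\ge 0$, $T_m=m(m+1)/2$ denotes the $m$-th triangular number. For a non-square integer $k\ge 2$, consider the equation $T_\xi=k\,T_t$ in nonnegative integers $t,\xi$. Let $R_k=\{\xi \bmod k : \exists\, t\ge 0 \text{ with } T_\xi=kT_t\}$, the set of least nonnegative remainders modulo $k$ of all $\xi$ occurring in solutions $(t,\xi)$, and $\upsilon=|R_k|$. *)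

From mathcomp Require Import all_boot all_order.
From mathcomp Require Import boolp.
Set Implicit Arguments. Unset Strict Implicit. Unset Printing Implicit Defensive.

Definition tri (m : nat) : nat := (m * m.+1) %/ 2.

Definition sol_index (k xi : nat) : Prop := exists t : nat, tri xi = k * tri t.

Definition Rk (k : nat) : {set 'I_k} :=
  [set r : 'I_k | `[< exists xi : nat, sol_index k xi /\ xi %% k = r >]].

Definition is_square (k : nat) : Prop := exists a : nat, k = a * a.

(* The heart of the matter is a reflection of solutions: for non-square [k], every
   solution index [xi] has a partner [xi'] with [xi + xi' + 1 = 0 (mod k)].  With
   [x = 2 xi + 1], [y = 2 t + 1] the equation becomes [x^2 - k y^2 = 1 - k], and the
   partner comes from multiplying [-x + y sqrt k] by a large square unit of the
   Pell equation [u^2 - k v^2 = 1].  Consequently [R_k] is stable under [mu |-> k - 1 - mu]; this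
   involution has no fixed point on [R_k] (a solution index is never
   [(k - 1)/2 mod k]), and [0] is a solution index.  Two general facts about a set
   stable under a fixed-point-free involution (even cardinality, and sums may be
   reindexed along the involution) then give all four statements. *)

From Stdlib Require ZArith Reals Lia Lra Psatz Classical.

Module Pell.
Import ZArith Reals Lia Lra Psatz Classical.
Local Open Scope Z_scope.

Lemma pigeonhole (K : nat) (g : nat -> Z) :
  (forall n, (n <= K)%nat -> 0 <= g n < Z.of_nat K) ->
  exists i j, (i < j <= K)%nat /\ g i = g j.
Proof.
revert g; induction K as [|K IH]; intros g Hg.
- specialize (Hg 0%nat (le_n 0)); lia.
- set (c := g (S K)).
  destruct (classic (exists i, (i <= K)%nat /\ g i = c)) as [[i [Hi Hc]]|Hnew].
  + exists i, (S K); split; [lia|exact Hc].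
  + (* redirect the value [K], now unused by [g (S K)], to [c] *)
    assert (Hc : 0 <= c < Z.of_nat (S K)) by (apply Hg; lia).
    destruct (IH (fun n => if Z.eq_dec (g n) (Z.of_nat K) then c else g n))
      as [i [j [Hij Heq]]].
    * intros n Hn. destruct (Z.eq_dec (g n) (Z.of_nat K)) as [E|E].
      -- assert (c <> Z.of_nat K) by (intro; apply Hnew; exists n; split; [lia|congruence]).
         lia.
      -- specialize (Hg n ltac:(lia)); lia.
    * exists i, j; split; [lia|].
      destruct (Z.eq_dec (g i) (Z.of_nat K)), (Z.eq_dec (g j) (Z.of_nat K));
        try congruence; exfalso; apply Hnew;
        [exists j | exists i]; split; lia || congruence.
Qed.

Lemma digits_unique (M a1 b1 a2 b2 : Z) :
  0 <= b1 < M -> 0 <= b2 < M -> a1 * M + b1 = a2 * M + b2 -> a1 = a2 /\ b1 = b2.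
Proof.
intros H1 H2 E.
assert (a1 = a2) as <-; [|lia].
destruct (Z.lt_trichotomy a1 a2) as [h|[h|h]]; [|exact h|]; nia.
Qed.

Lemma divide_of_mod_eq (n a b : Z) : 0 < n -> a mod n = b mod n -> (n | b - a).
Proof.
intros Hn E. exists (b / n - a / n).
rewrite (Z.div_mod a n), (Z.div_mod b n) at 1 by lia. rewrite E; ring.
Qed.

Section Units.
Variable k : Z.
Hypothesis k_ge2 : 2 <= k.
Hypothesis k_nonsquare : forall p q : Z, 1 <= q -> p * p <> k * (q * q).

Local Open Scope R_scope.

Let r := sqrt (IZR k).

Lemma r_pos : 0 < r.
Proof. apply sqrt_lt_R0, IZR_lt; lia. Qed.

Lemma r_sq : r * r = IZR k.
Proof. apply sqrt_sqrt, IZR_le; lia. Qed.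

Lemma floor_mul_r (q : Z) : (0 <= q)%Z ->
  IZR (Z.sqrt (k * (q * q))) <= IZR q * r < IZR (Z.sqrt (k * (q * q))) + 1.
Proof.
intros Hq.
destruct (Z.sqrt_spec (k * (q * q)) ltac:(nia)) as [Lo Hi].
assert (Hs := Z.sqrt_nonneg (k * (q * q))).
set (s := Z.sqrt (k * (q * q))) in *.
assert (0 <= IZR q) by (apply IZR_le; lia).
assert (0 <= IZR s) by (apply IZR_le; lia).
assert (rp := r_pos). assert (rr := r_sq).
apply IZR_le in Lo. apply IZR_lt in Hi.
rewrite !mult_IZR, succ_IZR in *; rewrite <- rr in *.
assert (0 <= IZR q * r) by nra.
split.
- destruct (Rle_or_lt (IZR s) (IZR q * r)) as [h|h]; [exact h|nra].
- destruct (Rlt_or_le (IZR q * r) (IZR s + 1)) as [h|h]; [exact h|nra].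
Qed.

(* The [Q+1] numbers
   [q sqrt k], [0 <= q <= Q], are sorted into [Q] boxes by the first base-[Q]
   digit [floor (Q q sqrt k) - Q floor (q sqrt k)] of their fractional part. *)
Lemma dirichlet (Q : Z) : (1 <= Q)%Z ->
  exists p q, (1 <= q <= Q)%Z /\ Rabs (IZR p - IZR q * r) < / IZR Q.
Proof.
intros HQ.
set (a := fun q => Z.sqrt (k * (q * q))).
set (digit := fun q => (a (Q * q) - Q * a q)%Z).
assert (HQ' : 1 <= IZR Q) by (apply IZR_le; lia).
assert (Ha : forall q, (0 <= q)%Z ->
  IZR (a q) <= IZR q * r < IZR (a q) + 1 /\
  IZR (a (Q * q)%Z) <= IZR Q * IZR q * r < IZR (a (Q * q)%Z) + 1).
{ intros q Hq. rewrite <- mult_IZR. split; apply floor_mul_r; lia. }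
assert (Hdigit : forall q, (0 <= q)%Z -> (0 <= digit q < Q)%Z).
{ intros q Hq. destruct (Ha q Hq) as [[A1 A2] [B1 B2]]. unfold digit.
  assert (L : IZR (Q * a q)%Z < IZR (a (Q * q)%Z + 1)%Z) by (rewrite mult_IZR, plus_IZR; nra).
  assert (U : IZR (a (Q * q)%Z) < IZR (Q * a q + Q)%Z) by (rewrite plus_IZR, mult_IZR; nra).
  apply lt_IZR in L, U. lia. }
destruct (pigeonhole (Z.to_nat Q) (fun n => digit (Z.of_nat n))) as [n1 [n2 [Hn E]]].
{ intros n _. rewrite Z2Nat.id by lia. apply Hdigit; lia. }
set (q1 := Z.of_nat n1) in *. set (q2 := Z.of_nat n2) in *.
exists (a q2 - a q1)%Z, (q2 - q1)%Z. split; [lia|].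
destruct (Ha q1 ltac:(lia)) as [[A1 A2] [B1 B2]].
destruct (Ha q2 ltac:(lia)) as [[C1 C2] [D1 D2]].
unfold digit in E. apply IZR_eq in E. rewrite !minus_IZR, !mult_IZR in E.
assert (iQ : IZR Q * / IZR Q = 1) by (field; lra).
assert (0 < / IZR Q) by (apply Rinv_0_lt_compat; lra).
rewrite !minus_IZR. apply Rabs_def1; nra.
Qed.

Definition norm (x : Z * Z) : Z := (fst x * fst x - k * (snd x * snd x))%Z.
Definition dist (x : Z * Z) : R := Rabs (IZR (fst x) - IZR (snd x) * r).

Let bound := (2 * Z.sqrt k + 2)%Z.
Definition good (x : Z * Z) : Prop := (1 <= snd x)%Z /\ (Z.abs (norm x) <= bound)%Z.

(* Dirichlet approximations are good: [p^2 - k q^2 = d (d + 2 q sqrt k)] with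
   [d = p - q sqrt k] and [q |d| <= 1]. *)
Lemma good_approx (Q : Z) : (1 <= Q)%Z -> exists x, good x /\ dist x < / IZR Q.
Proof.
intros HQ. destruct (dirichlet Q HQ) as [p [q [Hq D]]].
exists (p, q); split; [split; simpl; [lia|]|exact D].
unfold dist in D; simpl in D.
assert (HQ' : 1 <= IZR Q) by (apply IZR_le; lia).
assert (Hq' : 1 <= IZR q <= IZR Q) by (split; apply IZR_le; lia).
assert (iQ : IZR Q * / IZR Q = 1) by (field; lra).
assert (0 < / IZR Q) by (apply Rinv_0_lt_compat; lra).
destruct (floor_mul_r 1 ltac:(lia)) as [_ S]. rewrite Z.mul_1_r in S.
assert (rp := r_pos).
set (d := IZR p - IZR q * r) in *.
assert (EN : IZR (norm (p, q)) = d * (d + 2 * IZR q * r)).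
{ unfold norm; simpl. rewrite minus_IZR, !mult_IZR, <- r_sq. unfold d; ring. }
assert (Hd : Rabs d <= 1) by (apply Rlt_le, Rlt_le_trans with (/ IZR Q); [exact D|];
  rewrite <- Rinv_1; apply Rinv_le_contravar; lra).
assert (Hqd : IZR q * Rabs d <= 1) by (apply Rle_trans with (IZR Q * / IZR Q); nra).
assert (Hlt : Rabs (IZR (norm (p, q))) < IZR (bound + 1)).
{ rewrite EN, Rabs_mult. unfold bound; rewrite !plus_IZR, mult_IZR.
  assert (Rabs (d + 2 * IZR q * r) <= Rabs d + 2 * IZR q * r).
  { eapply Rle_trans; [apply Rabs_triang|]. rewrite (Rabs_right (2 * IZR q * r)); nra. }
  assert (0 <= Rabs d) by apply Rabs_pos.
  apply Rle_lt_trans with (Rabs d * (Rabs d + 2 * IZR q * r)); [apply Rmult_le_compat_l; auto|].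
  nra. }
rewrite <- abs_IZR in Hlt. apply lt_IZR in Hlt. lia.
Qed.

(* Since [sqrt k] is irrational, no good pair approximates it exactly. *)
Lemma dist_pos (x : Z * Z) : good x -> 0 < dist x.
Proof.
intros [Hq _]. apply Rabs_pos_lt. intro E.
apply (k_nonsquare (fst x) (snd x) Hq), eq_IZR.
rewrite !mult_IZR, <- r_sq. replace (IZR (fst x)) with (IZR (snd x) * r) by lra. ring.
Qed.

Lemma better_good (x : Z * Z) : good x -> exists y, good y /\ dist y < dist x.
Proof.
intros Hx. assert (P := dist_pos x Hx).
destruct (archimed (/ dist x)) as [U _].
set (Q := Z.max 1 (up (/ dist x))).
assert (HQ : / dist x <= IZR Q) by (apply Rle_trans with (IZR (up (/ dist x)));
  [lra|apply IZR_le; lia]).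
destruct (good_approx Q ltac:(lia)) as [y [Hy Dy]].
exists y; split; [exact Hy|].
apply Rlt_le_trans with (/ IZR Q); [exact Dy|].
rewrite <- (Rinv_inv (dist x)). apply Rinv_le_contravar; [apply Rinv_0_lt_compat|]; auto.
Qed.

Lemma good_chain (n : nat) : exists s : nat -> Z * Z,
  (forall i, (i <= n)%nat -> good (s i)) /\
  (forall i j, (i < j <= n)%nat -> dist (s j) < dist (s i)).
Proof.
induction n as [|n [s [Hgood Hdec]]].
- destruct (good_approx 1 ltac:(lia)) as [x [Hx _]].
  exists (fun _ => x); split; [auto|intros; exfalso; lia].
- destruct (better_good (s n) (Hgood n (le_n n))) as [y [Hy Hlt]].
  exists (fun i => if Nat.leb i n then s i else y); split.
  + intros i Hi. destruct (Nat.leb_spec i n); auto.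
  + intros i j Hij. destruct (Nat.leb_spec i n), (Nat.leb_spec j n); try (exfalso; lia).
    * apply Hdec; lia.
    * destruct (Nat.eq_dec i n) as [->|Hin]; [exact Hlt|].
      apply Rlt_trans with (dist (s n)); [exact Hlt|apply Hdec; lia].
Qed.

Local Open Scope Z_scope.

Lemma norm_nonzero (x : Z * Z) : 1 <= snd x -> norm x <> 0.
Proof. intros Hq E. apply (k_nonsquare (fst x) _ Hq). unfold norm in E; lia. Qed.

(* The class of a good pair: its norm [N] and its residues modulo [|N|], packed
   into one integer in mixed radix.  There are finitely many classes. *)
Definition class (x : Z * Z) : Z :=
  ((norm x + bound) * bound + fst x mod Z.abs (norm x)) * bound
  + snd x mod Z.abs (norm x).

Lemma class_range (x : Z * Z) : good x -> 0 <= class x < (2 * bound + 1) * bound * bound.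
Proof.
intros Hx. assert (HN := norm_nonzero x (proj1 Hx)). destruct Hx as [_ Hx].
assert (h1 := Z.mod_pos_bound (fst x) (Z.abs (norm x)) ltac:(lia)).
assert (h2 := Z.mod_pos_bound (snd x) (Z.abs (norm x)) ltac:(lia)).
unfold class. nia.
Qed.

Lemma class_collision (x y : Z * Z) : good x -> good y -> class x = class y ->
  norm y = norm x /\ (norm x | fst y - fst x) /\ (norm x | snd y - snd x).
Proof.
intros Hx Hy E.
assert (Nx := norm_nonzero x (proj1 Hx)). assert (Ny := norm_nonzero y (proj1 Hy)).
destruct Hx as [_ Bx], Hy as [_ By].
assert (mx1 := Z.mod_pos_bound (fst x) (Z.abs (norm x)) ltac:(lia)).
assert (mx2 := Z.mod_pos_bound (snd x) (Z.abs (norm x)) ltac:(lia)).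
assert (my1 := Z.mod_pos_bound (fst y) (Z.abs (norm y)) ltac:(lia)).
assert (my2 := Z.mod_pos_bound (snd y) (Z.abs (norm y)) ltac:(lia)).
unfold class in E.
apply digits_unique in E as [E E2]; [|lia|lia].
apply digits_unique in E as [E E1]; [|lia|lia].
assert (EN : norm y = norm x) by lia. rewrite EN in E1, E2.
split; [exact EN|]. split; apply Z.divide_abs_l, divide_of_mod_eq; lia.
Qed.

(* Two distinct pairs of the same norm [N], congruent modulo [N], give a
   nontrivial unit: [(p1 - q1 sqrt k)(p2 + q2 sqrt k) / N] is an algebraic integer of norm 1. *)
Lemma unit_of_collision (p1 q1 p2 q2 : Z) :
  1 <= q1 -> 1 <= q2 -> (p1, q1) <> (p2, q2) ->
  norm (p2, q2) = norm (p1, q1) ->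
  (norm (p1, q1) | p2 - p1) -> (norm (p1, q1) | q2 - q1) ->
  exists u v, u * u - k * (v * v) = 1 /\ v <> 0.
Proof.
intros Hq1 Hq2 Hne EN [A HA] [C HC].
assert (HN := norm_nonzero (p1, q1) Hq1).
unfold norm in *; simpl in *.
set (N := p1 * p1 - k * (q1 * q1)) in *.
assert (Hp2 : p2 = p1 + A * N) by lia. assert (Hq2' : q2 = q1 + C * N) by lia.
exists (1 + p1 * A - k * q1 * C), (A * q1 - p1 * C). split.
- (* Brahmagupta's identity for the product of the two pairs *)
  assert (Bra : (p1 * p2 - k * q1 * q2) * (p1 * p2 - k * q1 * q2)
                - k * ((p2 * q1 - p1 * q2) * (p2 * q1 - p1 * q2)) = N * N)
    by (transitivity ((p2 * p2 - k * (q2 * q2)) * N); [unfold N; ring|rewrite EN; ring]).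
  rewrite Hp2, Hq2' in Bra.
  apply (Z.mul_cancel_l _ _ (N * N)); [nia|].
  rewrite <- Bra at 2. unfold N; ring.
- intro Hv. apply Hne.
  assert (Cross : p2 * q1 = p1 * q2).
  { assert (D : p2 * q1 - p1 * q2 = N * (A * q1 - p1 * C)) by (rewrite Hp2, Hq2'; ring).
    rewrite Hv, Z.mul_0_r in D. lia. }
  assert (Q : N * (q2 * q2) = N * (q1 * q1)).
  { transitivity ((p1 * q2) * (p1 * q2) - k * (q1 * q1) * (q2 * q2)); [unfold N; ring|].
    rewrite <- Cross. transitivity ((p2 * p2 - k * (q2 * q2)) * (q1 * q1)); [ring|].
    rewrite EN. ring. }
  apply Z.mul_cancel_l in Q; [|exact HN].
  assert (Eq : q2 = q1).
  { destruct (Z.lt_trichotomy q2 q1) as [h|[h|h]]; [|exact h|].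
    - assert (q2 * q2 < q1 * q1) by (apply Z.mul_lt_mono_nonneg; lia). lia.
    - assert (q1 * q1 < q2 * q2) by (apply Z.mul_lt_mono_nonneg; lia). lia. }
  rewrite Eq in Cross |- *.
  assert (Ep : p1 = p2) by (apply (Z.mul_cancel_r _ _ q1); lia).
  rewrite Ep; reflexivity.
Qed.

(* Pell's equation [u^2 - k v^2 = 1] has a nontrivial solution: among more good
   pairs than there are classes, two distinct ones share a class. *)
Theorem pell : exists u v, u * u - k * (v * v) = 1 /\ v <> 0.
Proof.
set (M := (2 * bound + 1) * bound * bound).
destruct (good_chain (Z.to_nat M)) as [s [Hgood Hdec]].
destruct (pigeonhole (Z.to_nat M) (fun i => class (s i))) as [i [j [Hij Hcl]]].
{ intros n Hn. rewrite Z2Nat.id by (unfold M, bound; assert (0 <= Z.sqrt k) by apply Z.sqrt_nonneg; nia).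
  apply class_range, Hgood, Hn. }
assert (Gi := Hgood i ltac:(lia)). assert (Gj := Hgood j ltac:(lia)).
assert (Hne : s i <> s j) by (intro E; assert (H := Hdec i j Hij); rewrite E in H; lra).
destruct (class_collision _ _ Gi Gj Hcl) as [EN [Dp Dq]].
destruct (s i) as [p1 q1], (s j) as [p2 q2].
exact (unit_of_collision p1 q1 p2 q2 (proj1 Gi) (proj1 Gj) Hne EN Dp Dq).
Qed.

(* Squaring units gives solutions with arbitrarily large [v]. *)
Lemma pell_large (n : nat) :
  exists u v, u * u - k * (v * v) = 1 /\ 1 <= u /\ 1 <= v /\ Z.of_nat n <= v.
Proof.
induction n as [|n [u [v [E [Hu [Hv Hn]]]]]].
- destruct pell as [u [v [E Hv]]].
  exists (Z.abs u), (Z.abs v). split; [|split; [|split]]; nia.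
- exists (u * u + k * (v * v)), (2 * u * v). split; [|split; [|split]]; nia.
Qed.

(* The reflection behind Proposition 1.  Writing [x = 2 xi + 1] and [y = 2 t + 1],
   [xi (xi + 1) = k t (t + 1)] reads [x^2 - k y^2 = 1 - k].  Multiplying
   [-x + y sqrt k] by a square unit [U + V sqrt k = (u + v sqrt k)^2] (so that
   [U = 1 (mod 2k)] and [V] is even) with [V >= x] yields a new positive solution
   [x' = k V y - U x], [y' = U y - V x] with [x + x' = 0 (mod 2k)]. *)
Theorem reflect_solution (xi t : Z) :
  0 <= xi -> 0 <= t -> xi * (xi + 1) = k * (t * (t + 1)) ->
  exists xi' t' c, 0 <= xi' /\ 0 <= t' /\ xi' * (xi' + 1) = k * (t' * (t' + 1))
                   /\ xi + xi' + 1 = k * c.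
Proof.
intros Hxi Ht E.
destruct (pell_large (Z.to_nat (2 * xi + 1))) as [u [v [P [Hu [Hv Hbig]]]]].
rewrite Z2Nat.id in Hbig by lia.
set (x := 2 * xi + 1). set (y := 2 * t + 1).
set (U := 1 + 2 * k * (v * v)). set (V := 2 * u * v).
assert (Exy : x * x - k * (y * y) = 1 - k) by (unfold x, y; lia).
assert (PU : U * U - k * (V * V) = 1).
{ transitivity ((u * u - k * (v * v)) * (u * u - k * (v * v))); [|rewrite P; ring].
  unfold U, V. replace (1 + 2 * k * (v * v)) with (u * u - k * (v * v) + 2 * k * (v * v))
    by (rewrite P; ring). ring. }
assert (HV : x <= V).
{ assert (v <= u * v) by (rewrite <- (Z.mul_1_l v) at 1; apply Z.mul_le_mono_nonneg_r; lia).
  unfold V; lia. }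
assert (HU : 1 <= U).
{ assert (0 <= k * (v * v)) by (apply Z.mul_nonneg_nonneg; [lia|apply Z.square_nonneg]).
  unfold U; lia. }
assert (Hxx : x * x <= V * V) by (apply Z.mul_le_mono_nonneg; lia).
assert (Hyy : 1 <= y * y) by (unfold y; nia).
(* positivity of [x'] and [y'], by comparing squares *)
assert (Pos1 : U * x < k * V * y).
{ apply Z.square_lt_simpl_nonneg; [apply Z.mul_nonneg_nonneg; [apply Z.mul_nonneg_nonneg|]; lia|].
  assert (S : (k * V * y) * (k * V * y) - (U * x) * (U * x) = k * (V * V) * (k - 1) - x * x).
  { transitivity ((k * (V * V)) * (k * (y * y)) - (U * U) * (x * x)); [ring|].
    replace (k * (y * y)) with (x * x - 1 + k) by lia.
    replace (U * U) with (1 + k * (V * V)) by lia. ring. }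
  (* [k (k - 1) V^2 >= 2 V^2 >= 2 x^2 > x^2] *)
  assert (Hk : 2 <= k * (k - 1)) by nia.
  assert (2 * (V * V) <= k * (V * V) * (k - 1)) by
    (replace (k * (V * V) * (k - 1)) with ((k * (k - 1)) * (V * V)) by ring;
     apply Z.mul_le_mono_nonneg_r; [apply Z.square_nonneg|exact Hk]).
  lia. }
assert (Pos2 : V * x < U * y).
{ apply Z.square_lt_simpl_nonneg; [apply Z.mul_nonneg_nonneg; lia|].
  assert (S : (U * y) * (U * y) - (V * x) * (V * x) = y * y + (V * V) * (k - 1)).
  { transitivity ((U * U) * (y * y) - (V * V) * (x * x)); [ring|].
    replace (x * x) with (k * (y * y) + 1 - k) by lia.
    replace (U * U) with (1 + k * (V * V)) by lia. ring. }
  assert (0 <= (V * V) * (k - 1)) by (apply Z.mul_nonneg_nonneg; [apply Z.square_nonneg|lia]).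
  lia. }
set (xi' := k * u * v * y - k * (v * v) * x - xi - 1).
set (t' := t + k * (v * v) * y - u * v * x).
assert (X' : 2 * xi' + 1 = k * V * y - U * x) by (unfold xi', V, U, x; ring).
assert (Y' : 2 * t' + 1 = U * y - V * x) by (unfold t', V, U, y; ring).
exists xi', t', (u * v * y - v * v * x). split; [lia|]. split; [lia|]. split.
- assert (N' : (2 * xi' + 1) * (2 * xi' + 1) - k * ((2 * t' + 1) * (2 * t' + 1)) = 1 - k).
  { rewrite X', Y', <- Exy.
    transitivity ((U * U - k * (V * V)) * (x * x - k * (y * y))); [ring|rewrite PU; ring]. }
  assert (Sq : forall a, (2 * a + 1) * (2 * a + 1) = 4 * (a * (a + 1)) + 1) by (intro; ring).
  rewrite !Sq in N'. lia.
- unfold xi', x; ring.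
Qed.

End Units.

Corollary reflect_solution_nat (k : nat) :
  (2 <= k)%nat -> (forall p q : nat, (1 <= q)%nat -> (p * p <> k * (q * q))%nat) ->
  forall xi t : nat, (xi * (xi + 1) = k * (t * (t + 1)))%nat ->
  exists xi' t' c : nat,
    (xi' * (xi' + 1) = k * (t' * (t' + 1)))%nat /\ (xi + xi' + 1 = k * c)%nat.
Proof.
intros hk hns xi t E.
assert (hnsZ : forall p q : Z, (1 <= q)%Z -> (p * p <> Z.of_nat k * (q * q))%Z).
{ intros p q hq Ep. apply (hns (Z.abs_nat p) (Z.to_nat q)); [lia|].
  apply Nat2Z.inj. rewrite !Nat2Z.inj_mul, Zabs2Nat.id_abs, Z2Nat.id, <- Z.abs_mul, Ep by lia.
  apply Z.abs_eq; nia. }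
destruct (reflect_solution (Z.of_nat k) ltac:(lia) hnsZ (Z.of_nat xi) (Z.of_nat t))
  as [xi' [t' [c [H1 [H2 [H3 H4]]]]]]; [lia|lia|lia|].
assert (Hc : (0 <= c)%Z) by nia.
exists (Z.to_nat xi'), (Z.to_nat t'), (Z.to_nat c); split; lia.
Qed.

End Pell.

From mathcomp Require Import all_boot all_order.
From mathcomp Require Import boolp.
From mathcomp Require Import zify.
Set Implicit Arguments.
Unset Strict Implicit.
Unset Printing Implicit Defensive.

Section Involution.
Variables (T : finType) (f : T -> T) (A : {set T}).
Hypotheses (fK : involutive f) (fA : forall x, (f x \in A) = (x \in A)).

Lemma sum_involution (F : T -> nat) : \sum_(x in A) F (f x) = \sum_(x in A) F x.
Proof.
rewrite [RHS](reindex_inj (inv_inj fK)) /=.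
by apply: eq_bigl => x; rewrite fA.
Qed.

(* Comparing enumeration ranks, each pair contributes one [x] with
   [rank x < rank (f x)] and one with the reverse inequality. *)
Lemma card_fixfree_involution_even :
  (forall x, x \in A -> f x != x) -> ~~ odd #|A|.
Proof.
move=> fixfree.
pose below x := enum_rank x < enum_rank (f x).
have split_card : #|A| = \sum_(x in A) below x + \sum_(x in A) below (f x).
{ rewrite -big_split -sum1_card; apply: eq_bigr => x Ax.
  rewrite /below fK.
  have : enum_rank x != enum_rank (f x) :> nat
    by rewrite (inj_eq val_inj) (inj_eq enum_rank_inj) eq_sym fixfree.
  by case: ltngtP. }
by rewrite split_card (sum_involution below) addnn odd_double.
Qed.

End Involution.

Lemma sum_rev_stable (k : nat) (A : {set 'I_k}) :
  (forall i, (rev_ord i \in A) = (i \in A)) ->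
  (\sum_(i in A) (i : nat)) * 2 = (k - 1) * #|A|.
Proof.
move=> revA.
have rev_sum := sum_involution rev_ordK revA (fun i => nat_of_ord i).
rewrite muln2 -addnn {2}(esym rev_sum) -big_split /=.
rewrite (eq_bigr (fun=> k - 1)); last by move=> i _; have := ltn_ord i; lia.
by rewrite sum_nat_const mulnC.
Qed.

Lemma tri_double (m : nat) : tri m * 2 = m * m.+1.
Proof. by rewrite /tri divnK // dvdn2 oddM /= andbN. Qed.

Lemma sol_indexE (k xi : nat) :
  sol_index k xi <-> exists t, xi * xi.+1 = k * (t * t.+1).
Proof.
split => -[t Ht]; exists t.
- by rewrite -!tri_double Ht mulnA.
- by apply/eqP; rewrite -(eqn_pmul2r (isT : 0 < 2)) tri_double -mulnA tri_double Ht.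
Qed.

(* If [k q^2] is a square with [q > 0] then [k] is a square: dividing [p] and [q] by
   their gcd, the coprime [q'^2] divides [p'^2], hence [q' = 1]. *)
Lemma is_square_of_ratio (k p q : nat) : 0 < q -> p * p = k * (q * q) -> is_square k.
Proof.
move=> q_gt0 E.
set g := gcdn p q.
have g_gt0 : 0 < g by rewrite gcdn_gt0 q_gt0 orbT.
have [Hp Hq] : p = (p %/ g) * g /\ q = (q %/ g) * g by rewrite !divnK ?dvdn_gcdl ?dvdn_gcdr.
set p' := p %/ g in Hp; set q' := q %/ g in Hq.
have cop : coprime p' q'.
{ have H : gcdn p' q' * g = 1 * g by rewrite muln_gcdl -Hp -Hq mul1n.
  by move/eqP: H; rewrite eqn_pmul2r. }
have E' : p' * p' = k * (q' * q').
{ apply/eqP; rewrite -(eqn_pmul2r (_ : 0 < g * g)) ?muln_gt0 ?g_gt0 //; apply/eqP.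
  by rewrite mulnACA -Hp E -mulnA mulnACA -Hq. }
have q'1 : q' * q' = 1.
{ have dv : q' * q' %| p' * p' by rewrite E' dvdn_mull.
  have : coprime (q' * q') (p' * p') by rewrite coprimeMl !coprimeMr coprime_sym cop.
  by rewrite /coprime (gcdn_idPl dv) => /eqP. }
by exists p'; rewrite E' q'1 muln1.
Qed.

Lemma in_Rk (k : nat) (r : 'I_k) :
  (r \in Rk k) <-> exists xi, sol_index k xi /\ xi %% k = r.
Proof. by rewrite inE; split => [/asboolP|H]; [|apply/asboolP]. Qed.

Lemma zero_in_Rk (k : nat) (k_gt0 : 0 < k) : Ordinal k_gt0 \in Rk k.
Proof.
apply/in_Rk; exists 0; split; last by rewrite mod0n.
by exists 0; rewrite /tri muln0.
Qed.

(* No solution index is [(k - 1)/2 mod k]: otherwise [k] would divide [2 xi + 1],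
   whereas [(2 xi + 1)^2 = 4 k t (t + 1) + 1]. *)
Lemma Rk_rev_fixfree (k : nat) (mu : 'I_k) : 2 <= k -> mu \in Rk k -> rev_ord mu != mu.
Proof.
move=> k_ge2 /in_Rk [xi [/sol_indexE [t E] Hmu]].
apply/negP => /eqP/(congr1 val) /= Hrev.
have Hk : k = 2 * mu + 1 by have := ltn_ord mu; lia.
have k_dvd : k %| 2 * xi + 1.
{ rewrite (divn_eq xi k) Hmu; move: (xi %/ k) => q.
  by apply/dvdnP; exists (2 * q + 1); lia. }
have : k %| 4 * (k * (t * t.+1)) + 1.
{ have -> : 4 * (k * (t * t.+1)) + 1 = (2 * xi + 1) * (2 * xi + 1) by rewrite -E; lia.
  exact: dvdn_mulr. }
rewrite dvdn_addr; last by rewrite dvdn_mull // dvdn_mulr.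
by rewrite dvdn1 => /eqP k1; rewrite k1 in k_ge2.
Qed.

Section Reflection.
Variable k : nat.
Hypotheses (k_ge2 : 2 <= k) (k_nonsquare : ~ is_square k).

Lemma sol_index_reflect (xi : nat) :
  sol_index k xi -> exists xi', sol_index k xi' /\ k %| xi + xi' + 1.
Proof.
move=> /sol_indexE [t E].
have hns : forall p q : nat, (1 <= q)%coq_nat -> p * p <> k * (q * q).
{ by move=> p q /leP q_gt0 Ep; apply: k_nonsquare; apply: (is_square_of_ratio q_gt0 Ep). }
have E1 : xi * (xi + 1) = k * (t * (t + 1)) by rewrite !addn1.
have [xi' [t' [c [E' Hc]]]] := Pell.reflect_solution_nat k (leP k_ge2) hns xi t E1.
exists xi'; split; last by apply/dvdnP; exists c; rewrite mulnC.
have {}E' : xi' * (xi' + 1) = k * (t' * (t' + 1)) := E'.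
by apply: (proj2 (sol_indexE k xi')); exists t'; rewrite !addn1 in E'.
Qed.

Lemma Rk_rev (mu : 'I_k) : (rev_ord mu \in Rk k) = (mu \in Rk k).
Proof.
suff rev_in : forall nu : 'I_k, nu \in Rk k -> rev_ord nu \in Rk k.
  by apply/idP/idP => [/rev_in|/rev_in //]; rewrite rev_ordK.
move=> nu /in_Rk [xi [Hxi Hnu]].
have [xi' [Hxi' k_dvd]] := sol_index_reflect Hxi.
apply/in_Rk; exists xi'; split => //=.
have r_lt := ltn_pmod xi' (ltnW k_ge2).
rewrite {1}(divn_eq xi k) {1}(divn_eq xi' k) Hnu in k_dvd.
set a := xi %/ k in k_dvd; set b := xi' %/ k in k_dvd; set r := xi' %% k in k_dvd r_lt *.
clearbody a b r.
have {k_dvd} : k %| nu + r + 1.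
{ move: k_dvd; have -> : a * k + nu + (b * k + r) + 1 = (a + b) * k + (nu + r + 1) by lia.
  by rewrite dvdn_addr ?dvdn_mull. }
move=> /dvdnP [m Hm].
have m1 : m = 1 by have := ltn_ord nu; nia.
by move: Hm; rewrite m1 mul1n; lia.
Qed.

End Reflection.

Theorem proposition1 (k : nat) (hk : 2 <= k) (hns : ~ is_square k) :
  [/\ (exists r : 'I_k, r \in Rk k /\ nat_of_ord r = 0)
      /\ (exists r : 'I_k, r \in Rk k /\ nat_of_ord r = k - 1),
      (forall mu : 'I_k, mu \in Rk k ->
         exists nu : 'I_k, nu \in Rk k /\ nat_of_ord nu = k - 1 - mu),
      ~~ odd #|Rk k|
    & (\sum_(mu in Rk k) nat_of_ord mu) * 2 = (k - 1) * #|Rk k| ].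
Proof.
have k_gt0 : 0 < k by apply: ltnW.
have zero_in := zero_in_Rk k_gt0.
have revR := Rk_rev hk hns.
split.
- split; first by exists (Ordinal k_gt0).
  by exists (rev_ord (Ordinal k_gt0)); rewrite revR.
- move=> mu mu_in; exists (rev_ord mu); rewrite revR; split => //=.
  by have := ltn_ord mu; lia.
- apply: (card_fixfree_involution_even rev_ordK revR) => mu.
  exact: Rk_rev_fixfree.
- exact: sum_rev_stable revR.
Qed.
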